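(* Let $\{f_i\}_{i\in\mathbb N}$ be an orthonormal set in a Hilbert space and let $\{\alpha_i\}_{i\in\mathbb N}$ be a sequence in $[0,1]$. Set $\tilde e_1=f_1$ and define inductively for $i\in\mathbb N$ \[ e_i=\sqrt{\alpha_i}\,\tilde e_i+\sqrt{1-\alpha_i}\,f_{i+1},\qquad\tilde e_{i+1}=\sqrt{1-\alpha_i}\,\tilde e_i-\sqrt{\alpha_i}\,f_{i+1}. \] If $\prod_{i=n}^\infty(1-\alpha_i)=0$ for each $n\in\mathbb N$, then $\{e_i\}_{i\in\mathbb N}$ is an orthonormal basis of $\overline{\operatorname{span}}\{f_i\}_{i\in\mathbb N}$, and each $e_k$ lies in the (algebraic) linear span of $\{f_i\}_{i\in\mathbb N}$. In particular, if $\alpha_i<1$ for all $i$ and $\sum_{i=1}^\infty\frac{\alpha_i}{1-\alpha_i}=\infty$, then $\{e_i\}_{i\in\mathbb N}$ is an orthonormal basis of $\overline{\operatorname{span}}\{f_i\}_{i\in\mathbb N}$.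
   Context: $\overline{\operatorname{span}}$ is the closed linear span. *)

From HB Require Import structures.
From mathcomp Require Import all_boot all_order all_algebra.
From mathcomp Require Export complex.
From mathcomp Require Import all_classical all_reals all_analysis.
Import Order.TTheory GRing.Theory Num.Theory.
Import numFieldNormedType.Exports.
Local Open Scope ring_scope.
Local Open Scope classical_set_scope.

Set Implicit Arguments.
Unset Strict Implicit.
Unset Printing Implicit Defensive.

(* A (complex) inner product on a normed space V over C = R[i] whose norm
   is induced by it: linear in the first argument, conjugate symmetric, and
   <x, x> = |x|^2.  A Hilbert space is then a completeNormedModType R[i]
   equipped with such an inner product. *)
Definition inner_product (R : realType) (V : normedModType R[i])
    (ip : V -> V -> R[i]) : Prop :=
  [/\ forall (a : R[i]) (x y z : V), ip (a *: x + y) z = a * ip x z + ip y z,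
      forall x y : V, ip y x = (ip x y)^*
    & forall x : V, ip x x = `|x| ^+ 2].

Definition orthonormal_family (R : realType) (V : normedModType R[i])
    (ip : V -> V -> R[i]) (u : nat -> V) : Prop :=
  forall i j : nat, ip (u i) (u j) = (i == j)%:R.

Definition lin_span (R : realType) (V : normedModType R[i]) (u : nat -> V)
  : set V :=
  [set x | exists (n : nat) (c : nat -> R[i]), x = \sum_(i < n) c i *: u i].

Definition closed_span (R : realType) (V : normedModType R[i]) (u : nat -> V)
  : set V := closure (lin_span u).

Definition is_ONB_of (R : realType) (V : normedModType R[i])
    (ip : V -> V -> R[i]) (u : nat -> V) (M : set V) : Prop :=
  orthonormal_family ip u /\ closed_span u = M.

From HB Require Import structures.
From mathcomp Require Import all_boot all_order all_algebra.
From mathcomp Require Import complex.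
From mathcomp Require Import all_classical all_reals all_analysis.
From mathcomp Require Import ring lra.
Import Order.TTheory GRing.Theory Num.Theory.
Import numFieldNormedType.Exports.
Local Open Scope ring_scope.
Local Open Scope classical_set_scope.

Set Implicit Arguments.
Unset Strict Implicit.
Unset Printing Implicit Defensive.

(* Each step of the recursion replaces the orthonormal pair (ẽ_i, f_{i+1})
   by its image (e_i, ẽ_{i+1}) under the orthogonal matrix
   [[√α_i, √(1-α_i)], [√(1-α_i), -√α_i]], so the e_i are orthonormal and
   ẽ_n ≡ √(∏_{n ≤ k < N} (1-α_k)) ẽ_N modulo span{e_k}.  Every finite
   combination of the f_i is congruent to some d ẽ_n, hence lies within
   |d| √(∏_{n ≤ k < N} (1-α_k)) of span{e_k}, and this tends to 0.
   For the second statement, ∏ (1-α_k) · (1 + ∑ α_k/(1-α_k)) ≤ 1 over every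
   block of indices, so the divergence of the series kills every tail
   product. *)

Section LinSpan.
Variables (R : realType) (V : normedModType R[i]) (u : nat -> V).

Lemma lin_span0 : lin_span u 0.
Proof. by exists 0%N, (fun=> 0); rewrite big_ord0. Qed.

Lemma lin_spanD x y : lin_span u x -> lin_span u y -> lin_span u (x + y).
Proof.
move=> [n1 [c1 ->]] [n2 [c2 ->]].
pose pad n (c : nat -> R[i]) i := if (i < n)%N then c i else 0.
have widen n (c : nat -> R[i]) m : (n <= m)%N ->
    \sum_(i < n) c i *: u i = \sum_(i < m) pad n c i *: u i.
  move=> le_nm; rewrite (big_ord_widen m (fun i => c i *: u i)) // big_mkcond.
  by apply: eq_bigr => i _; rewrite /pad; case: ifP; rewrite ?scale0r.
exists (n1 + n2)%N, (fun i => pad n1 c1 i + pad n2 c2 i).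
rewrite (widen n1 c1 _ (leq_addr n2 n1)) (widen n2 c2 _ (leq_addl n1 n2)).
by rewrite -big_split; apply: eq_bigr => i _; rewrite scalerDl.
Qed.

Lemma lin_spanZ k x : lin_span u x -> lin_span u (k *: x).
Proof.
move=> [n [c ->]]; exists n, (fun i => k * c i).
by rewrite scaler_sumr; apply: eq_bigr => i _; rewrite scalerA.
Qed.

Lemma lin_spanB x y : lin_span u x -> lin_span u y -> lin_span u (x - y).
Proof. by move=> ux uy; rewrite -scaleN1r; apply/lin_spanD/lin_spanZ. Qed.

Lemma lin_span_gen k : lin_span u (u k).
Proof.
exists k.+1, (fun i => (i == k)%:R).
rewrite big_ord_recr /= eqxx scale1r big1 ?add0r // => i _.
by rewrite ltn_eqF // scale0r.
Qed.

Lemma lin_span_subr_trans x y z :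
  lin_span u (x - y) -> lin_span u (y - z) -> lin_span u (x - z).
Proof. by move=> uxy uyz; rewrite -(subrKA y); apply: lin_spanD. Qed.

Lemma lin_span_subrD x x' y y' : lin_span u (x - x') -> lin_span u (y - y') ->
  lin_span u (x + y - (x' + y')).
Proof. by move=> uxx uyy; rewrite opprD addrACA; apply: lin_spanD. Qed.

Lemma lin_span_subrZ k x y : lin_span u (x - y) -> lin_span u (k *: x - k *: y).
Proof. by rewrite -scalerBr; apply: lin_spanZ. Qed.

End LinSpan.

Lemma lin_span_sub (R : realType) (V : normedModType R[i]) (u v : nat -> V) :
  (forall k, lin_span v (u k)) -> lin_span u `<=` lin_span v.
Proof.
move=> uv _ [n [c ->]]; elim: n => [|n IHn].
  by rewrite big_ord0; apply: lin_span0.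
by rewrite big_ord_recr /=; apply/lin_spanD/lin_spanZ.
Qed.

Section Closure.
Variables (R : realType) (V : normedModType R[i]).

Lemma closure_sub_closure (A B : set V) :
  A `<=` closure B -> closure A `<=` closure B.
Proof.
by move=> /closureS; rewrite -(closure_id (closure B)).1 //; apply: closed_closure.
Qed.

Lemma closure_approx (A : set V) x :
  (forall r : R, 0 < r -> exists2 z, A z & `|x - z| < r%:C%C) -> closure A x.
Proof.
move=> approx B /nbhs_ballP [eps eps_gt0 epsB].
have eps_real : (complex.Re eps)%:C%C = eps by apply/RRe_real/gtr0_real.
have Re_gt0 : 0 < complex.Re eps by rewrite -ltcR eps_real.
have [z Az xz_lt] := approx _ Re_gt0.
by exists z; split=> //; apply: epsB; rewrite -ball_normE /ball_ /= -eps_real.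
Qed.

End Closure.

Section InnerProduct.
Variables (R : realType) (V : normedModType R[i]) (ip : V -> V -> R[i]).
Hypothesis ip_inner : inner_product ip.

Lemma ipDl x y z : ip (x + y) z = ip x z + ip y z.
Proof.
by case: ip_inner => linl _ _; have := linl 1 x y z; rewrite scale1r mul1r.
Qed.

Lemma ip0l z : ip 0 z = 0.
Proof. by apply: (addrI (ip 0 z)); rewrite -ipDl !addr0. Qed.

Lemma ipZl k x z : ip (k *: x) z = k * ip x z.
Proof. by case: ip_inner => linl _ _; rewrite -[k *: x]addr0 linl ip0l addr0. Qed.

Lemma ipBl x y z : ip (x - y) z = ip x z - ip y z.
Proof. by rewrite ipDl -scaleN1r ipZl mulN1r. Qed.

Lemma ipDr x y z : ip z (x + y) = ip z x + ip z y.
Proof.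
by case: ip_inner => _ ipC _; rewrite ipC (ipC x) (ipC y) ipDl rmorphD.
Qed.

Lemma ipBr x y z : ip z (x - y) = ip z x - ip z y.
Proof.
by case: ip_inner => _ ipC _; rewrite ipC (ipC x) (ipC y) ipBl rmorphB.
Qed.

Lemma ipZr_real (k : R) x z : ip z (k%:C%C *: x) = k%:C%C * ip z x.
Proof.
case: ip_inner => _ ipC _; rewrite ipC (ipC x) ipZl rmorphM.
by congr (_ * _); apply: conjc_real.
Qed.

Lemma ip_eq0C x y : ip x y = 0 -> ip y x = 0.
Proof. by case: ip_inner => _ ipC _ xy0; rewrite ipC xy0 rmorph0. Qed.

Lemma ip_eq1_norm x : ip x x = 1 -> `|x| = 1.
Proof. by case: ip_inner => _ _ ->; move/eqP; rewrite pexpr_eq1 // => /eqP. Qed.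

End InnerProduct.

Section Construction.
Variables (R : realType) (V : normedModType R[i]) (ip : V -> V -> R[i]).
Variables (f : nat -> V) (a : nat -> R) (e et : nat -> V).
Hypothesis ip_inner : inner_product ip.
Hypothesis f_orthonormal : orthonormal_family ip f.
Hypothesis a01 : forall i, 0 <= a i <= 1.
Hypothesis et0 : et 0%N = f 0%N.
Hypothesis e_def : forall i, e i = (Num.sqrt (a i))%:C%C *: et i
                                  + (Num.sqrt (1 - a i))%:C%C *: f i.+1.
Hypothesis et_def : forall i, et i.+1 = (Num.sqrt (1 - a i))%:C%C *: et i
                                       - (Num.sqrt (a i))%:C%C *: f i.+1.

Local Notation s i := ((Num.sqrt (a i))%:C%C : R[i]).
Local Notation c i := ((Num.sqrt (1 - a i))%:C%C : R[i]).
Local Notation ipDl := (ipDl ip_inner).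
Local Notation ipBl := (ipBl ip_inner).
Local Notation ipZl := (ipZl ip_inner).
Local Notation ipDr := (ipDr ip_inner).
Local Notation ipBr := (ipBr ip_inner).
Local Notation ipZr := (ipZr_real ip_inner).

Lemma sqr_s_add_sqr_c i : s i * s i + c i * c i = 1.
Proof.
have /andP[a_ge0 a_le1] := a01 i.
rewrite -!rmorphM -rmorphD -!expr2 !sqr_sqrtr ?subr_ge0 //.
by rewrite addrC subrK.
Qed.

Lemma et_lin_span_f n : lin_span f (et n).
Proof.
elim: n => [|n IHn]; first by rewrite et0; apply: lin_span_gen.
by rewrite et_def; apply/lin_spanB/lin_spanZ/lin_span_gen; apply: lin_spanZ.
Qed.

Lemma e_lin_span_f n : lin_span f (e n).
Proof.
rewrite e_def; apply/lin_spanD/lin_spanZ/lin_span_gen.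
exact/lin_spanZ/et_lin_span_f.
Qed.

Lemma ip_et_f n m : (n < m)%N -> ip (et n) (f m) = 0.
Proof.
elim: n m => [|n IHn] m lt_nm; first by rewrite et0 f_orthonormal; case: m lt_nm.
rewrite et_def ipBl !ipZl IHn ?(ltnW lt_nm) // f_orthonormal (ltn_eqF lt_nm).
by rewrite !mulr0 subrr.
Qed.

Lemma ip_et_et n : ip (et n) (et n) = 1.
Proof.
elim: n => [|n IHn]; first by rewrite et0 f_orthonormal eqxx.
rewrite et_def ipBl !ipBr !ipZl !ipZr IHn (ip_et_f (ltnSn n)).
rewrite (ip_eq0C ip_inner (ip_et_f (ltnSn n))) f_orthonormal eqxx.
by rewrite !mulr0 !mulr1 subr0 sub0r opprK addrC sqr_s_add_sqr_c.
Qed.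

Lemma ip_e_et k : ip (e k) (et k) = s k.
Proof.
rewrite e_def ipDl !ipZl ip_et_et (ip_eq0C ip_inner (ip_et_f (ltnSn k))).
by rewrite mulr0 mulr1 addr0.
Qed.

Lemma ip_e_f k : ip (e k) (f k.+1) = c k.
Proof.
rewrite e_def ipDl !ipZl (ip_et_f (ltnSn k)) f_orthonormal eqxx.
by rewrite mulr0 mulr1 add0r.
Qed.

Lemma ip_e_f_gt k m : (k.+1 < m)%N -> ip (e k) (f m) = 0.
Proof.
move=> lt_km; rewrite e_def ipDl !ipZl ip_et_f ?(ltnW lt_km) //.
by rewrite f_orthonormal (ltn_eqF lt_km) !mulr0 addr0.
Qed.

Lemma ip_e_et_gt k m : (k < m)%N -> ip (e k) (et m) = 0.
Proof.
elim: m => // m IHm; rewrite ltnS leq_eqVlt => /predU1P[<-|lt_km].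
  by rewrite et_def ipBr !ipZr ip_e_et ip_e_f mulrC subrr.
by rewrite et_def ipBr !ipZr IHm // ip_e_f_gt ?ltnS // !mulr0 subrr.
Qed.

Lemma ip_e_e k : ip (e k) (e k) = 1.
Proof.
by rewrite [in X in ip _ X]e_def ipDr !ipZr ip_e_et ip_e_f sqr_s_add_sqr_c.
Qed.

Lemma ip_e_e_gt k j : (k < j)%N -> ip (e k) (e j) = 0.
Proof.
move=> lt_kj; rewrite (e_def j) ipDr !ipZr ip_e_et_gt // ip_e_f_gt ?ltnS //.
by rewrite !mulr0 addr0.
Qed.

Lemma e_orthonormal : orthonormal_family ip e.
Proof.
move=> k j; case: (ltngtP k j) => [lt_kj|lt_jk|->]; last exact: ip_e_e.
- by rewrite ip_e_e_gt.
- by rewrite (ip_eq0C ip_inner (ip_e_e_gt lt_jk)).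
Qed.

Lemma et_decomp n : et n = s n *: e n + c n *: et n.+1.
Proof.
rewrite e_def et_def !scalerDr !scalerN !scalerA (mulrC (c n) (s n)).
by rewrite addrACA subrr addr0 -scalerDl sqr_s_add_sqr_c scale1r.
Qed.

Lemma f_decomp n : f n.+1 = c n *: e n - s n *: et n.+1.
Proof.
rewrite e_def et_def !scalerDr !scalerN !scalerA (mulrC (c n) (s n)) opprD opprK.
by rewrite addrACA subrr add0r -scalerDl addrC sqr_s_add_sqr_c scale1r.
Qed.

Local Notation P n N := (\prod_(n <= k < N) (1 - a k)).

Lemma et_cong_next n : lin_span e (et n - c n *: et n.+1).
Proof. by rewrite {1}et_decomp addrK; apply/lin_spanZ/lin_span_gen. Qed.

Lemma et_cong_tail n N :
  (n <= N)%N -> lin_span e (et n - (Num.sqrt (P n N))%:C%C *: et N).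
Proof.
move=> /subnK <-; elim: (N - n)%N => [|j IHj].
  by rewrite add0n big_geq // sqrtr1 scale1r subrr; apply: lin_span0.
apply: lin_span_subr_trans IHj _.
have P_ge0 : 0 <= P n (j + n)%N.
  by apply: prodr_ge0 => k _; rewrite subr_ge0; case/andP: (a01 k).
rewrite addSn big_nat_recr ?leq_addl //= sqrtrM // rmorphM -scalerA.
exact/lin_span_subrZ/et_cong_next.
Qed.

Lemma f_cong_et n : exists d, lin_span e (f n - d *: et n).
Proof.
case: n => [|n]; first by exists 1; rewrite scale1r et0 subrr; apply: lin_span0.
exists (- s n); rewrite f_decomp scaleNr opprK subrK.
exact/lin_spanZ/lin_span_gen.
Qed.

Lemma lin_span_f_cong_et x :
  lin_span f x -> exists n d, lin_span e (x - d *: et n).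
Proof.
move=> [n [w ->]]; exists n; elim: n => [|n [d IHn]].
  by exists 0; rewrite big_ord0 scale0r subr0; apply: lin_span0.
have [dn fn_cong] := f_cong_et n.
exists ((d + w n * dn) * c n); rewrite big_ord_recr /=.
apply: (@lin_span_subr_trans _ _ _ _ ((d + w n * dn) *: et n)).
  by rewrite scalerDl -scalerA; apply/lin_span_subrD/lin_span_subrZ.
by rewrite -scalerA; apply/lin_span_subrZ/et_cong_next.
Qed.

Lemma lin_span_f_closure_e : (forall n, (fun N => P n N) @ \oo --> (0 : R)) ->
  lin_span f `<=` closure (lin_span e).
Proof.
move=> P0 x /lin_span_f_cong_et [n [d x_cong]].
apply: closure_approx => r r_gt0.
set nd := complex.Re `|d|.
have d_norm : `|d| = nd%:C%C by apply/esym/RRe_real/normr_real.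
have nd_ge0 : 0 <= nd by rewrite -ler0c -d_norm.
pose delta := r / (nd + 1).
have delta_gt0 : 0 < delta by rewrite divr_gt0 // ltr_wpDl.
have nd_delta : nd * delta + delta = r.
  by rewrite -[X in _ + X]mul1r -mulrDl mulrC divfK // gt_eqF // ltr_wpDl.
near \oo => N.
have le_nN : (n <= N)%N by near: N; apply: nbhs_infty_ge.
have sqrtP_lt : Num.sqrt (P n N) < delta.
  rewrite -(ger0_norm (ltW delta_gt0)) -sqrtr_sqr ltr_sqrt ?exprn_gt0 //.
  by near: N; apply: cvgr_lt (P0 n) _ _; rewrite exprn_gt0.
exists (x - (d * (Num.sqrt (P n N))%:C%C) *: et N).
  apply: lin_span_subr_trans x_cong _; rewrite -scalerA.
  exact/lin_span_subrZ/et_cong_tail.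
rewrite subKr normrZ normrM (ip_eq1_norm ip_inner (ip_et_et N)) mulr1.
rewrite d_norm ger0_norm ?ler0c ?sqrtr_ge0 // -rmorphM ltcR.
have : nd * Num.sqrt (P n N) <= nd * delta by rewrite ler_wpM2l // ltW.
lra.
Unshelve. all: end_near.
Qed.

Lemma e_ONB_of_closed_span_f :
  (forall n, (fun N => P n N) @ \oo --> (0 : R)) ->
  is_ONB_of ip e (closed_span f).
Proof.
move=> P0; split; first exact: e_orthonormal.
apply/seteqP; split; apply: closure_sub_closure; last exact: lin_span_f_closure_e.
exact: subset_trans (lin_span_sub e_lin_span_f) (@subset_closure _ _).
Qed.

End Construction.

Section TailProduct.
Variables (R : realType) (a : nat -> R).
Hypothesis a01 : forall k, 0 <= a k < 1.

Lemma prod1B_mul_1D_sum_le1 m n :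
  \prod_(m <= k < n) (1 - a k) * (1 + \sum_(m <= k < n) a k / (1 - a k)) <= 1.
Proof.
elim: n => [|n IHn]; first by rewrite !big_geq // add0r mulr1.
case: (leqP m n) => [le_mn|lt_nm]; last by rewrite !big_geq // add0r mulr1.
rewrite !big_nat_recr //=.
set Q := \prod_(m <= k < n) _ in IHn *; set T := \sum_(m <= k < n) _ in IHn *.
have Q_ge0 : 0 <= Q.
  by apply: prodr_ge0 => k _; rewrite subr_ge0 ltW //; case/andP: (a01 k).
have T_ge0 : 0 <= T.
  apply: sumr_ge0 => k _; have /andP[ak_ge0 ak_lt1] := a01 k.
  by rewrite divr_ge0 // subr_ge0 ltW.
have /andP[an_ge0 an_lt1] := a01 n.
have an_div : (1 - a n) * (a n / (1 - a n)) = a n.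
  by rewrite mulrC divfK // gt_eqF // subr_gt0.
have -> : Q * (1 - a n) * (1 + (T + a n / (1 - a n)))
          = (1 - a n) * (Q * (1 + T)) + Q * ((1 - a n) * (a n / (1 - a n))).
  by ring.
have Q_le1 : Q <= 1 by nra.
have : 0 <= (1 - a n) * (1 - Q * (1 + T)) by rewrite mulr_ge0 // subr_ge0 // ltW.
have : 0 <= a n * (1 - Q) by rewrite mulr_ge0 // subr_ge0.
rewrite an_div; lra.
Qed.

Lemma prod1B_tail_cvg0 :
  (fun N => \sum_(0 <= k < N) a k / (1 - a k)) @ \oo --> +oo ->
  forall n, (fun N => \prod_(n <= k < N) (1 - a k)) @ \oo --> (0 : R).
Proof.
move=> sum_oo n; apply/cvgrPdist_lt => eps eps_gt0.
near=> N.
have le_nN : (n <= N)%N by near: N; apply: nbhs_infty_ge.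
have : eps^-1 + \sum_(0 <= k < n) a k / (1 - a k)
       <= \sum_(0 <= k < N) a k / (1 - a k).
  by near: N; move/cvgryPge: sum_oo; apply.
rewrite (@big_cat_nat _ _ _ n 0 N _ _ (leq0n n) le_nN) /=.
rewrite [eps^-1 + _]addrC lerD2l => T_ge.
have := prod1B_mul_1D_sum_le1 n N.
have Q_ge0 : 0 <= \prod_(n <= k < N) (1 - a k).
  by apply: prodr_ge0 => k _; rewrite subr_ge0 ltW //; case/andP: (a01 k).
rewrite sub0r normrN ger0_norm //.
have : eps * eps^-1 = 1 by rewrite mulfV // gt_eqF.
have : 0 < eps^-1 by rewrite invr_gt0.
nra.
Unshelve. all: end_near.
Qed.

End TailProduct.

Theorem lemma3p1 (R : realType) (V : completeNormedModType R[i])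
    (ip : V -> V -> R[i]) (f : nat -> V) (a : nat -> R) (e et : nat -> V) :
  inner_product ip ->
  orthonormal_family ip f ->
  (forall i, 0 <= a i <= 1) ->
  et 0%N = f 0%N ->
  (forall i, e i = (Num.sqrt (a i))%:C%C *: et i
                   + (Num.sqrt (1 - a i))%:C%C *: f i.+1) ->
  (forall i, et i.+1 = (Num.sqrt (1 - a i))%:C%C *: et i
                       - (Num.sqrt (a i))%:C%C *: f i.+1) ->
  ((forall n : nat,
      (fun N : nat => \prod_(n <= k < N) (1 - a k)) @ \oo --> (0 : R)) ->
     is_ONB_of ip e (closed_span f) /\ (forall k, lin_span f (e k)))
  /\
  ((forall i, a i < 1) ->
   (fun N : nat => \sum_(0 <= k < N) a k / (1 - a k)) @ \oo --> +oo ->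
     is_ONB_of ip e (closed_span f)).
Proof.
move=> ip_inner f_orthonormal a01 et0 e_def et_def.
have ONB := e_ONB_of_closed_span_f ip_inner f_orthonormal a01 et0 e_def et_def.
split=> [P0|a_lt1 sum_oo].
  by split; [exact: ONB | exact: e_lin_span_f et0 e_def et_def].
apply/ONB/prod1B_tail_cvg0 => // k.
by have /andP[-> _] := a01 k; rewrite a_lt1.
Qed.
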